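(* Let $\mathcal M\subseteq\bigcup_{K\ge1}\mathcal F_K\times\mathcal Q_K$ satisfy: (1) $K(F)<M$ for all $(F,Q)\in\mathcal M$; (2) for every $(F,Q)\in\mathcal M$, $\mathcal F_{K(F)}^{\mathrm{an}}\times\{Q\}\subseteq\mathcal M$. Then $\mathcal M$ is identifiable if and only if (a) for all $(F^1,Q^1),(F^2,Q^2)\in\mathcal M$ with $F^1Q^1=F^2Q^2$ we have $\mathrm{cone}(Q^1)=\mathrm{cone}(Q^2)$, and (b) for every $(F,Q)\in\mathcal M$ the rows of $Q$ are linearly independent.
   Context: Fix positive integers $M$ and $N$. For a positive integer $K$, $\mathcal F_K$ is the set of real $M\times K$ matrices with all entries in $[0,1]$, and $\mathcal Q_K$ is the set of real $K\times N$ matrices with entries in $[0,1]$ each of whose columns sums to $1$. $K(F)$ is the number of columns of $F$. $\mathcal F_K^{\mathrm{an}}$ is the set of $F\in\mathcal F_K$ such that for every $k\in\{1,\dots,K\}$ there is a row $s$ with $F_{sk}>0$ and $F_{s\ell}=0$ for all $\ell\ne k$. For a matrix $A$ with nonnegative entries, $\mathrm{cone}(A)$ is the set of all linear combinations with nonnegative coefficients of the rows of $A$. $(F^1,Q^1)\sim(F^2,Q^2)$ means $F^1,F^2$ have the same number $K$ of columns and there is a permutation $\pi$ of $\{1,\dots,K\}$ with $F^2_{sk}=F^1_{s\pi(k)}$ and $Q^2_{ki}=Q^1_{\pi(k)i}$ for all $s,k,i$. $\mathcal M$ is identifiable if for all $(F^1,Q^1),(F^2,Q^2)\in\mathcal M$,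 $F^1Q^1=F^2Q^2$ implies $(F^1,Q^1)\sim(F^2,Q^2)$. *)

From HB Require Import structures.
From mathcomp Require Import all_boot all_order all_algebra.
From mathcomp Require Import reals.
Set Implicit Arguments. Unset Strict Implicit. Unset Printing Implicit Defensive.
Import Order.TTheory GRing.Theory Num.Theory.
Local Open Scope ring_scope.

Definition inF (R : realType) (M K : nat) (F : 'M[R]_(M, K)) : Prop :=
  forall s k, 0 <= F s k <= 1.

Definition inQ (R : realType) (K N : nat) (Q : 'M[R]_(K, N)) : Prop :=
  (forall k i, 0 <= Q k i <= 1) /\ (forall i, \sum_(k < K) Q k i = 1).

Definition inFan (R : realType) (M K : nat) (F : 'M[R]_(M, K)) : Prop :=
  inF F /\
  forall k : 'I_K, exists s : 'I_M, 0 < F s k /\ forall l : 'I_K, l != k -> F s l = 0.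

Definition in_cone (R : realType) (K N : nat) (A : 'M[R]_(K, N)) (v : 'rV[R]_N) : Prop :=
  exists c : 'rV[R]_K, (forall k, 0 <= c 0 k) /\ v = c *m A.

Definition model (R : realType) (M N : nat) :=
  forall K : nat, 'M[R]_(M, K) -> 'M[R]_(K, N) -> Prop.

(* (F1,Q1) ~ (F2,Q2): a bijection pi : 'I_K2 -> 'I_K1 (forcing K1 = K2)
   with F2_{sk} = F1_{s pi(k)} and Q2_{ki} = Q1_{pi(k) i}. *)
Definition equiv_pair (R : realType) (M N K1 K2 : nat)
  (F1 : 'M[R]_(M, K1)) (Q1 : 'M[R]_(K1, N))
  (F2 : 'M[R]_(M, K2)) (Q2 : 'M[R]_(K2, N)) : Prop :=
  exists pi : 'I_K2 -> 'I_K1, bijective pi /\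
    (forall s k, F2 s k = F1 s (pi k)) /\ (forall k i, Q2 k i = Q1 (pi k) i).

Definition identifiable (R : realType) (M N : nat) (Mod : model R M N) : Prop :=
  forall K1 (F1 : 'M[R]_(M, K1)) Q1 K2 (F2 : 'M[R]_(M, K2)) Q2,
    Mod K1 F1 Q1 -> Mod K2 F2 Q2 -> F1 *m Q1 = F2 *m Q2 ->
    equiv_pair F1 Q1 F2 Q2.

(* Equivalent pairs have the same rows of Q up to order, hence the
   same cone.  If c Q = 0, take the anchored matrix whose free row (it exists
   because K < M) is constantly 1/2, and perturb that row by a small multiple
   of c: both matrices lie in F^an and have the same product with Q, yet the
   anchor rows force any equivalence between them to be the identity, so the
   perturbation, hence c, vanishes.  Equal cones give nonnegative A, B with A Q1 = Q2 and
   B Q2 = Q1.  Independence of the rows makes A and B mutually inverse, and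
   mutually inverse nonnegative matrices are monomial.  Since the columns of
   Q1 and Q2 sum to 1, so do those of A, so A is a permutation matrix, and
   F1 = F2 A then exhibits the equivalence. *)

From HB Require Import structures.
From mathcomp Require Import all_boot all_order all_algebra.
From mathcomp Require Import reals.
From mathcomp Require Import lra.
Set Implicit Arguments. Unset Strict Implicit. Unset Printing Implicit Defensive.
Import Order.TTheory GRing.Theory Num.Theory.
Local Open Scope ring_scope.

Section SupportedRows.
Variables (R : pzRingType) (m n : nat) (A : 'M[R]_(m, n)) (f : 'I_m -> 'I_n).
Hypothesis A_supp : forall i j, j != f i -> A i j = 0.

Lemma mulmx_supp_row p (X : 'M[R]_(n, p)) i k : (A *m X) i k = A i (f i) * X (f i) k.
Proof.
by rewrite mxE (bigD1 (f i)) //= big1 ?addr0 // => j /A_supp->; rewrite mul0r.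
Qed.

Lemma mulmx_supp_col p (X : 'M[R]_(p, m)) s i :
  injective f -> (X *m A) s (f i) = X s i * A i (f i).
Proof.
move=> f_inj; rewrite mxE (bigD1 i) //= big1 ?addr0 // => l l_i.
by rewrite A_supp ?mulr0 // (inj_eq f_inj) eq_sym.
Qed.

End SupportedRows.

Section NonnegInverse.
Variable R : numDomainType.

Lemma mulmx_nonneg_gt0 m n p (A : 'M[R]_(m, n)) (B : 'M[R]_(n, p)) i j l :
  (forall i j, 0 <= A i j) -> (forall i j, 0 <= B i j) ->
  0 < A i j -> 0 < B j l -> 0 < (A *m B) i l.
Proof.
move=> A0 B0 Aij Bjl; rewrite mxE (bigD1 j) //= ltr_pwDl ?mulr_gt0 //.
by rewrite sumr_ge0 // => k _; rewrite mulr_ge0.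
Qed.

Lemma nonneg_mx_inv_monomial m n (A : 'M[R]_(m, n)) (B : 'M[R]_(n, m)) :
  (forall i j, 0 <= A i j) -> (forall i j, 0 <= B i j) ->
  A *m B = 1%:M -> B *m A = 1%:M ->
  exists2 f : 'I_m -> 'I_n, injective f & forall i j, j != f i -> A i j = 0.
Proof.
move=> A0 B0 AB BA.
have pos_term i : exists j, 0 < A i j /\ 0 < B j i.
  have [j /= ABji] : exists j, true && (0 < A i j * B j i).
    apply: psumr_neq0P => [j _|]; first by rewrite mulr_ge0.
    have := congr1 (fun X : 'M_m => X i i) AB; rewrite !mxE eqxx => ->.
    by apply/eqP; rewrite oner_eq0.
  exists j; move: ABji; rewrite !lt0r mulf_eq0 negb_or mulr_ge0 // !A0 !B0.
  by case/andP=> /andP[-> ->].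
have [f f_pos] := fin_all_exists pos_term.
exists f => [i i' fii'|i j j_fi].
  apply/eqP; apply: contraT => ii'.
  have := mulmx_nonneg_gt0 A0 B0 (f_pos i).1 (_ : 0 < B (f i) i').
  by rewrite AB mxE (negbTE ii') ltxx; apply; rewrite fii'; exact: (f_pos i').2.
apply/eqP; apply: contraT => Aij.
have := mulmx_nonneg_gt0 B0 A0 (f_pos i).2 (_ : 0 < A i j).
by rewrite BA mxE eq_sym (negbTE j_fi) ltxx; apply; rewrite lt0r Aij A0.
Qed.

End NonnegInverse.

Lemma exists_scale_entries_le (R : numFieldType) n (c : 'rV[R]_n) (e : R) :
  0 < e -> exists2 t : R, t != 0 & forall k, `|t * c 0 k| <= e.
Proof.
move=> e_gt0; set m := 1 + \sum_k `|c 0 k|.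
have m_gt0 : 0 < m by rewrite ltr_pwDl ?sumr_ge0.
exists (e / m) => [|k]; first by rewrite mulf_neq0 ?invr_eq0 ?gt_eqF.
have ck_le : `|c 0 k| <= m.
  by rewrite /m (bigD1 k) //= addrCA lerDl addr_ge0 ?sumr_ge0.
rewrite normrM ger0_norm; last by apply: divr_ge0; apply: ltW.
by rewrite mulrAC ler_pdivrMr // ler_wpM2l //; apply: ltW.
Qed.

Lemma inQ_colsum (R : realType) K N (Q : 'M[R]_(K, N)) :
  inQ Q -> const_mx 1 *m Q = const_mx 1 :> 'rV_N.
Proof.
case=> _ Q_sum; apply/rowP => i; rewrite !mxE.
by under eq_bigr do rewrite mxE mul1r; exact: Q_sum.
Qed.

Section Cones.
Variables (R : realType) (N : nat).

Lemma in_cone_sub_mx K K' (Qa : 'M[R]_(K, N)) (Qb : 'M[R]_(K', N)) :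
  (forall v, in_cone Qa v -> in_cone Qb v) ->
  exists2 A : 'M[R]_(K, K'), (forall i j, 0 <= A i j) & A *m Qb = Qa.
Proof.
move=> sub_ab.
have row_in_cone k : exists a : 'rV[R]_K', (forall j, 0 <= a 0 j) /\ row k Qa = a *m Qb.
  apply: sub_ab; exists (delta_mx 0 k); split; last by rewrite -rowE.
  by move=> j; rewrite mxE ler0n.
have [a a_spec] := fin_all_exists row_in_cone.
exists (\matrix_k a k) => [i j|]; first by rewrite mxE; apply: (a_spec i).1.
by apply/row_matrixP => k; rewrite row_mul rowK (a_spec k).2.
Qed.

Lemma in_cone_reindex K K' (Q : 'M[R]_(K, N)) (Q' : 'M[R]_(K', N))
    (pi : 'I_K' -> 'I_K) v :
  bijective pi -> (forall k i, Q' k i = Q (pi k) i) -> in_cone Q v -> in_cone Q' v.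
Proof.
move=> pi_bij Q'_pi [c [c_ge0 ->]].
exists (\row_k c 0 (pi k)); split=> [k|]; first by rewrite mxE.
apply/rowP => i; rewrite !mxE (reindex pi) /=; last exact: onW_bij.
by apply: eq_bigr => k _; rewrite mxE Q'_pi.
Qed.

Lemma equiv_pair_in_cone M K1 K2 (F1 : 'M[R]_(M, K1)) (Q1 : 'M[R]_(K1, N))
    (F2 : 'M[R]_(M, K2)) (Q2 : 'M[R]_(K2, N)) v :
  equiv_pair F1 Q1 F2 Q2 -> in_cone Q1 v <-> in_cone Q2 v.
Proof.
move=> [pi [pi_bij [_ Q_pi]]]; have [g piK gK] := pi_bij.
split; apply: in_cone_reindex; [exact: pi_bij | exact: Q_pi | |].
  by exists pi.
by move=> j i; rewrite Q_pi gK.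
Qed.

End Cones.

Section AnchoredMatrices.
Variables (R : realType) (M K : nat) (s0 : 'I_M).
Hypothesis K_le_s0 : (K <= s0)%N.

Definition anchored_mx (r : 'rV[R]_K) : 'M[R]_(M, K) :=
  \matrix_s (if s == s0 then r else row s (pid_mx K)).

Let anchor (k : 'I_K) : 'I_M := widen_ord (leq_trans K_le_s0 (ltnW (ltn_ord s0))) k.

Lemma anchored_mx_anchor (r : 'rV[R]_K) k l : anchored_mx r (anchor k) l = (k == l)%:R.
Proof.
have anchor_neq : anchor k != s0.
  by rewrite -val_eqE /= neq_ltn (leq_trans (ltn_ord k) K_le_s0).
by rewrite mxE (negbTE anchor_neq) mxE /pid_mx mxE /= ltn_ord andbT.
Qed.

Lemma anchored_mx_s0 (r : 'rV[R]_K) k : anchored_mx r s0 k = r 0 k.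
Proof. by rewrite mxE eqxx. Qed.

Lemma anchored_mx_inFan (r : 'rV[R]_K) :
  (forall k, 0 <= r 0 k <= 1) -> inFan (anchored_mx r).
Proof.
move=> r01; split=> [s k|k].
  rewrite mxE; case: eqP => _; first exact: r01.
  by rewrite /pid_mx !mxE ler0n lern1 leq_b1.
exists (anchor k); rewrite anchored_mx_anchor eqxx ltr01; split=> // l.
by rewrite anchored_mx_anchor eq_sym => /negbTE->.
Qed.

Lemma anchored_mx_mulmx N (Q : 'M[R]_(K, N)) (r r' : 'rV[R]_K) :
  r *m Q = r' *m Q -> anchored_mx r *m Q = anchored_mx r' *m Q.
Proof. by move=> rQ; apply/row_matrixP => s; rewrite !row_mul !rowK; case: eqP. Qed.

Lemma anchored_mx_equiv_eq N (Q Q' : 'M[R]_(K, N)) (r r' : 'rV[R]_K) :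
  equiv_pair (anchored_mx r) Q (anchored_mx r') Q' -> r = r'.
Proof.
move=> [pi [_ [F_pi _]]].
have pi_id k : pi k = k.
  have := F_pi (anchor k) k; rewrite !anchored_mx_anchor eqxx.
  by case: eqP => [<-|_ /eqP] //; rewrite oner_eq0.
by apply/rowP => k; have := F_pi s0 k; rewrite !anchored_mx_s0 pi_id => ->.
Qed.

End AnchoredMatrices.

Lemma row_free_of_anchored_identifiable (R : realType) M N K (Q : 'M[R]_(K, N)) :
  (K < M)%N ->
  (forall F F' : 'M[R]_(M, K), inFan F -> inFan F' -> F *m Q = F' *m Q ->
     equiv_pair F Q F' Q) ->
  row_free Q.
Proof.
move=> K_lt_M idfQ; apply: inj_row_free => c cQ.
have half_gt0 : 0 < 2^-1 :> R by rewrite invr_gt0 ltr0n.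
have [t t_neq0 tc_le] := exists_scale_entries_le c half_gt0.
pose r : 'rV[R]_K := const_mx 2^-1.
have r01 k : 0 <= r 0 k <= 1 by rewrite mxE; lra.
have r'01 k : 0 <= (r + t *: c) 0 k <= 1.
  by have := tc_le k; rewrite !mxE ler_norml; lra.
have r'Q : r *m Q = (r + t *: c) *m Q by rewrite mulmxDl -scalemxAl cQ scaler0 addr0.
pose s0 : 'I_M := Ordinal K_lt_M.
have K_le_s0 : (K <= s0)%N := leqnn K.
have /eqP := anchored_mx_equiv_eq K_le_s0 (idfQ _ _ (anchored_mx_inFan K_le_s0 r01)
  (anchored_mx_inFan K_le_s0 r'01) (anchored_mx_mulmx s0 r'Q)).
by rewrite eq_sym addrC -subr_eq0 addrK scalemx_eq0 (negbTE t_neq0) => /eqP.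
Qed.

Lemma equiv_pair_of_cone_eq (R : realType) M N K1 K2
    (F1 : 'M[R]_(M, K1)) (Q1 : 'M[R]_(K1, N))
    (F2 : 'M[R]_(M, K2)) (Q2 : 'M[R]_(K2, N)) :
  inQ Q1 -> inQ Q2 -> row_free Q1 -> row_free Q2 ->
  (forall v, in_cone Q1 v <-> in_cone Q2 v) -> F1 *m Q1 = F2 *m Q2 ->
  equiv_pair F1 Q1 F2 Q2.
Proof.
move=> Q1_st Q2_st Q1_free Q2_free cone_eq FQ.
have [A A_ge0 AQ1] := in_cone_sub_mx (fun v => (cone_eq v).2).
have [B B_ge0 BQ2] := in_cone_sub_mx (fun v => (cone_eq v).1).
have AB : A *m B = 1%:M.
  by apply: (row_free_inj Q2_free); rewrite /= -mulmxA BQ2 AQ1 mul1mx.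
have BA : B *m A = 1%:M.
  by apply: (row_free_inj Q1_free); rewrite /= -mulmxA AQ1 BQ2 mul1mx.
have [f f_inj A_supp] := nonneg_mx_inv_monomial A_ge0 B_ge0 AB BA.
have [g g_inj _] := nonneg_mx_inv_monomial B_ge0 A_ge0 BA AB.
have f_bij : bijective f := inj_card_bij f_inj (leq_card _ g_inj).
have A_f1 k : A k (f k) = 1.
  have: const_mx 1 *m A = const_mx 1 :> 'rV_K1.
    by apply: (row_free_inj Q1_free); rewrite /= -mulmxA AQ1 !inQ_colsum.
  move/(congr1 (fun X : 'rV_K1 => X 0 (f k))).
  by rewrite mulmx_supp_col // !mxE mul1r.
have FA : F1 = F2 *m A by apply: (row_free_inj Q1_free); rewrite /= -mulmxA AQ1.
exists f; split=> //; split=> [s k|k i].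
  by rewrite FA mulmx_supp_col // A_f1 mulr1.
by rewrite -AQ1 (mulmx_supp_row A_supp) A_f1 mul1r.
Qed.

Theorem mainTheorem6 (R : realType) (M N : nat) (Mod : model R M N)
  (hM : (0 < M)%N) (hN : (0 < N)%N)
  (hsub : forall K F Q, Mod K F Q -> (0 < K)%N /\ inF F /\ inQ Q)
  (h1 : forall K F Q, Mod K F Q -> (K < M)%N)
  (h2 : forall K F Q, Mod K F Q -> forall F' : 'M[R]_(M, K), inFan F' -> Mod K F' Q) :
  identifiable Mod <->
  ((forall K1 (F1 : 'M[R]_(M, K1)) Q1 K2 (F2 : 'M[R]_(M, K2)) Q2,
      Mod K1 F1 Q1 -> Mod K2 F2 Q2 -> F1 *m Q1 = F2 *m Q2 ->
      forall v : 'rV[R]_N, in_cone Q1 v <-> in_cone Q2 v)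
   /\ (forall K F Q, Mod K F Q -> row_free Q)).
Proof.
split=> [idf | [cone_eq Q_free]].
  split=> [K1 F1 Q1 K2 F2 Q2 mod1 mod2 FQ v | K F Q modFQ].
    exact: equiv_pair_in_cone (idf _ _ _ _ _ _ mod1 mod2 FQ).
  apply: (row_free_of_anchored_identifiable (h1 _ _ _ modFQ)) => F1 F2 F1_an F2_an.
  exact: idf (h2 _ _ _ modFQ _ F1_an) (h2 _ _ _ modFQ _ F2_an).
move=> K1 F1 Q1 K2 F2 Q2 mod1 mod2 FQ.
have [_ [_ Q1_st]] := hsub _ _ _ mod1.
have [_ [_ Q2_st]] := hsub _ _ _ mod2.
exact: equiv_pair_of_cone_eq Q1_st Q2_st (Q_free _ _ _ mod1) (Q_free _ _ _ mod2)
  (cone_eq _ _ _ _ _ _ mod1 mod2 FQ) FQ.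
Qed.
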